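(* Let $\mathcal A,\mathcal B,\mathcal C,\mathcal D$ be collections and $\alpha$ an ordinal. Suppose that for each $\xi<\alpha$ there are functions $\overleftarrow T_{\mathrm I,\xi}:\mathcal B\to\mathcal A$ and $\overrightarrow T_{\mathrm{II},\xi}:(\bigcup\mathcal A)\times\mathcal B\to\bigcup\mathcal B$ such that (Tr1) if $x\in\overleftarrow T_{\mathrm I,\xi}(B)$ then $\overrightarrow T_{\mathrm{II},\xi}(x,B)\in B$; and (Tr2) if $x_\xi\in\overleftarrow T_{\mathrm I,\xi}(B_\xi)$ for all $\xi<\alpha$ and $\{x_\xi:\xi<\alpha\}\in\mathcal C$, then $\{\overrightarrow T_{\mathrm{II},\xi}(x_\xi,B_\xi):\xi<\alpha\}\in\mathcal D$. Then $G^\alpha_1(\mathcal A,\mathcal C)\le_{\mathrm{II}}G^\alpha_1(\mathcal B,\mathcal D)$.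
   Context: In the game $G^\alpha_1(\mathcal E,\mathcal F)$, at each stage $\xi<\alpha$ One plays $E_\xi\in\mathcal E$ and Two picks $x_\xi\in E_\xi$; Two wins iff $\{x_\xi:\xi<\alpha\}\in\mathcal F$, otherwise One wins. A strategy for One is a function $\sigma:(\bigcup\mathcal E)^{<\alpha}\to\mathcal E$ (from the sequence of Two's previous moves); it is predetermined if it depends only on the stage $\xi$. A strategy for Two is a function $\tau:\mathcal E^{<\alpha}\to\bigcup\mathcal E$ choosing an element of One's latest move; it is Markov if it is a function $\mathcal E\times\alpha\to\bigcup\mathcal E$ of One's latest move and the stage. A strategy is winning if its player wins every play following it. $G\le_{\mathrm{II}}H$ means: (1) if Two has a winning Markov strategy in $G$ then Two has one in $H$; (2) if Two has a winning strategy in $G$ then Two has one in $H$; (3) if One has no winning strategy in $G$ then One has none in $H$; (4) if One has no winning predetermined strategy in $G$ then One has none in $H$. *)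

From Stdlib Require Import Classical.



Definition set (T : Type) := T -> Prop.

(* The ordinal alpha is represented by a type I of stages, well-ordered by lt:
   the stages xi < alpha are the elements of I (every well-order is
   order-isomorphic to an ordinal). *)
Definition well_order {I : Type} (lt : I -> I -> Prop) : Prop :=
  well_founded lt /\
  (forall a b c, lt a b -> lt b c -> lt a c) /\
  (forall a b, lt a b \/ a = b \/ lt b a).

Definition below (I : Type) (lt : I -> I -> Prop) (xi : I) := {eta : I | lt eta xi}.

Arguments below {I} lt xi.

Definition restr (I : Type) (lt : I -> I -> Prop) (T : Type) (f : I -> T) (xi : I)
  : below lt xi -> T := fun eta => f (proj1_sig eta).

Arguments restr {I} lt {T} f xi _.

Definition range {I T : Type} (f : I -> T) : set T := fun y => exists xi, f xi = y.

Section Game.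
Variables (I : Type) (lt : I -> I -> Prop) (X : Type).
Variables (E F : set (set X)).

(* Strategies for One: from the sequence of Two's previous moves, to E. *)
Definition one_strategy (sigma : forall xi : I, (below lt xi -> X) -> set X) : Prop :=
  forall xi h, E (sigma xi h).

Definition follows_one (sigma : forall xi : I, (below lt xi -> X) -> set X)
  (x : I -> X) : Prop :=
  forall xi, sigma xi (restr lt x xi) (x xi).

Definition one_has_winning_strategy : Prop :=
  exists sigma, one_strategy sigma /\
    forall x, follows_one sigma x -> ~ F (range x).

Definition one_has_winning_predetermined_strategy : Prop :=
  exists sigma : I -> set X, (forall xi, E (sigma xi)) /\
    forall x : I -> X, (forall xi, sigma xi (x xi)) -> ~ F (range x).

(* Strategies for Two: from One's previous moves and One's latest move,
   choose an element of the latest move. *)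
Definition two_strategy (tau : forall xi : I, (below lt xi -> set X) -> set X -> X) : Prop :=
  forall xi h Ex, E Ex -> Ex (tau xi h Ex).

Definition two_has_winning_strategy : Prop :=
  exists tau, two_strategy tau /\
    forall e : I -> set X, (forall xi, E (e xi)) ->
      F (range (fun xi => tau xi (restr lt e xi) (e xi))).

Definition two_has_winning_markov_strategy : Prop :=
  exists tau : set X -> I -> X, (forall Ex xi, E Ex -> Ex (tau Ex xi)) /\
    forall e : I -> set X, (forall xi, E (e xi)) ->
      F (range (fun xi => tau (e xi) xi)).
End Game.
Arguments one_strategy {I} lt {X} E sigma.
Arguments follows_one {I} lt {X} sigma x.
Arguments one_has_winning_strategy {I} lt {X} E F.
Arguments one_has_winning_predetermined_strategy {I X} E F.
Arguments two_strategy {I} lt {X} E tau.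
Arguments two_has_winning_strategy {I} lt {X} E F.
Arguments two_has_winning_markov_strategy {I X} E F.

Definition le_II {I : Type} (lt : I -> I -> Prop) {X Y : Type}
  (E F : set (set X)) (E' F' : set (set Y)) : Prop :=
  (two_has_winning_markov_strategy (I:=I) E F -> two_has_winning_markov_strategy (I:=I) E' F') /\
  (two_has_winning_strategy lt E F -> two_has_winning_strategy lt E' F') /\
  (~ one_has_winning_strategy lt E F -> ~ one_has_winning_strategy lt E' F') /\
  (~ one_has_winning_predetermined_strategy (I:=I) E F ->
     ~ one_has_winning_predetermined_strategy (I:=I) E' F').

(* Two transfers a strategy from G(A, C) to G(B, D) by translating moves: when
   One plays B, Two pretends One played TI(B) in the first game, obtains an
   answer x there and replies TII(x, B); (Tr1) makes this a legal move and
   (Tr2) turns won plays into won plays.  Conversely One transfers a strategy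
   from G(B, D) to G(A, C) by running a simulated play of G(B, D) in which
   Two's answers x are replaced by TII(x, B) and playing TI(B) whenever the
   simulation plays B.  For a predetermined strategy no simulation is needed;
   in general the simulated move at stage xi depends on all earlier simulated
   moves, so it is defined by well-founded recursion along the stages. *)
From Stdlib Require Import FunctionalExtensionality.

Section Simulation.
Variables (I X Y : Type) (lt : I -> I -> Prop).
Hypothesis lt_wf : well_founded lt.
Hypothesis lt_trans : forall a b c, lt a b -> lt b c -> lt a c.
Variable sigma : forall xi : I, (below lt xi -> Y) -> set Y.
Variable translate : I -> X -> set Y -> Y.

Definition below_restr {T : Type} {xi : I} (h : below lt xi -> T)
  (eta : below lt xi) : below lt (proj1_sig eta) -> T :=
  fun zeta => h (exist _ (proj1_sig zeta)
                   (lt_trans _ _ _ (proj2_sig zeta) (proj2_sig eta))).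

Definition simulated_step (xi : I)
  (rec : forall eta, lt eta xi -> (below lt eta -> X) -> set Y)
  (h : below lt xi -> X) : set Y :=
  sigma xi (fun eta => translate (proj1_sig eta) (h eta)
                         (rec (proj1_sig eta) (proj2_sig eta) (below_restr h eta))).

Definition simulated_move : forall xi : I, (below lt xi -> X) -> set Y :=
  Fix lt_wf (fun xi => (below lt xi -> X) -> set Y) simulated_step.

Lemma simulated_move_eq (xi : I) (h : below lt xi -> X) :
  simulated_move xi h =
  sigma xi (fun eta => translate (proj1_sig eta) (h eta)
                         (simulated_move (proj1_sig eta) (below_restr h eta))).
Proof.
  unfold simulated_move. rewrite Fix_eq; [reflexivity |].
  intros zeta f g Hfg.
  replace g with f; [reflexivity |].
  apply functional_extensionality_dep; intro eta.
  apply functional_extensionality_dep; intro p.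
  apply Hfg.
Qed.

Definition simulated_play (x : I -> X) (xi : I) : Y :=
  translate xi (x xi) (simulated_move xi (restr lt x xi)).

Lemma simulated_move_play (x : I -> X) (xi : I) :
  simulated_move xi (restr lt x xi) = sigma xi (restr lt (simulated_play x) xi).
Proof.
  (* [below_restr (restr lt x xi) eta] is convertible to [restr lt x (proj1_sig eta)]. *)
  apply simulated_move_eq.
Qed.

End Simulation.

Arguments simulated_move {I X Y lt} lt_wf lt_trans sigma translate xi _.
Arguments simulated_play {I X Y lt} lt_wf lt_trans sigma translate x xi.

Section Transfer.
Variables (X Y I : Type) (lt : I -> I -> Prop).
Variables (A C : set (set X)) (B D : set (set Y)).
Variables (TI : I -> set Y -> set X) (TII : I -> X -> set Y -> Y).
Hypothesis HTI : forall xi Bs, B Bs -> A (TI xi Bs).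
Hypothesis Tr1 : forall xi x Bs, B Bs -> TI xi Bs x -> Bs (TII xi x Bs).
Hypothesis Tr2 : forall (x : I -> X) (Bs : I -> set Y),
  (forall xi, B (Bs xi)) ->
  (forall xi, TI xi (Bs xi) (x xi)) ->
  C (range x) ->
  D (range (fun xi => TII xi (x xi) (Bs xi))).

Lemma two_markov_strategy_transfer :
  two_has_winning_markov_strategy (I:=I) A C ->
  two_has_winning_markov_strategy (I:=I) B D.
Proof.
  intros [tau [Htau Hwin]].
  exists (fun Bs xi => TII xi (tau (TI xi Bs) xi) Bs). split.
  - intros Bs xi HB. apply Tr1, Htau, HTI; assumption.
  - intros e He. apply Tr2; [assumption | |].
    + intro xi. apply Htau, HTI, He.
    + apply (Hwin (fun xi => TI xi (e xi))). intro xi. apply HTI, He.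
Qed.

Lemma two_strategy_transfer :
  two_has_winning_strategy lt A C -> two_has_winning_strategy lt B D.
Proof.
  intros [tau [Htau Hwin]].
  exists (fun xi h Bs =>
    TII xi (tau xi (fun eta => TI (proj1_sig eta) (h eta)) (TI xi Bs)) Bs).
  split.
  - intros xi h Bs HB. apply Tr1, Htau, HTI; assumption.
  - intros e He. apply Tr2; [assumption | |].
    + intro xi. apply Htau, HTI, He.
    + apply (Hwin (fun xi => TI xi (e xi))). intro xi. apply HTI, He.
Qed.

Lemma one_predetermined_strategy_transfer :
  one_has_winning_predetermined_strategy (I:=I) B D ->
  one_has_winning_predetermined_strategy (I:=I) A C.
Proof.
  intros [sigma [Hsigma Hwin]].
  exists (fun xi => TI xi (sigma xi)). split.
  - intro xi. apply HTI, Hsigma.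
  - intros x Hx HC. apply (Hwin (fun xi => TII xi (x xi) (sigma xi))).
    + intro xi. apply Tr1; auto.
    + apply Tr2; auto.
Qed.

Lemma one_strategy_transfer (lt_wf : well_founded lt)
  (lt_trans : forall a b c, lt a b -> lt b c -> lt a c) :
  one_has_winning_strategy lt B D -> one_has_winning_strategy lt A C.
Proof.
  intros [sigma [Hsigma Hwin]].
  set (move := simulated_move lt_wf lt_trans sigma TII).
  assert (Hmove : forall xi h, B (move xi h)).
  { intros xi h. unfold move. rewrite simulated_move_eq. apply Hsigma. }
  exists (fun xi h => TI xi (move xi h)). split.
  - intros xi h. apply HTI, Hmove.
  - intros x Hx HC.
    apply (Hwin (simulated_play lt_wf lt_trans sigma TII x)).
    + intro xi. rewrite <- simulated_move_play.
      exact (Tr1 _ _ _ (Hmove _ _) (Hx xi)).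
    + apply Tr2; [intro xi; apply Hmove | exact Hx | exact HC].
Qed.

End Transfer.

Theorem mainTheorem7
  (X Y I : Type) (lt : I -> I -> Prop) (Hwo : well_order lt)
  (A C : set (set X)) (B D : set (set Y))
  (TI : I -> set Y -> set X) (TII : I -> X -> set Y -> Y)
  (HTI : forall xi Bs, B Bs -> A (TI xi Bs))
  (HTII : forall xi x Bs, (exists a, A a /\ a x) -> B Bs ->
            exists b, B b /\ b (TII xi x Bs))
  (Tr1 : forall xi x Bs, B Bs -> TI xi Bs x -> Bs (TII xi x Bs))
  (Tr2 : forall (x : I -> X) (Bs : I -> set Y),
           (forall xi, B (Bs xi)) ->
           (forall xi, TI xi (Bs xi) (x xi)) ->
           C (range x) ->
           D (range (fun xi => TII xi (x xi) (Bs xi)))) :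
  le_II lt A C B D.
Proof.
  destruct Hwo as [lt_wf [lt_trans _]].
  repeat split.
  - eapply two_markov_strategy_transfer; eassumption.
  - eapply two_strategy_transfer; eassumption.
  - intros HnoA HB. apply HnoA. eapply one_strategy_transfer; eassumption.
  - intros HnoA HB. apply HnoA.
    eapply one_predetermined_strategy_transfer; eassumption.
Qed.
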